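(* Consider the problem $$\text{(P)}\qquad \max_{\beta\in X}\ R(\beta)=\frac1n\sum_{i=1}^n r(w^i\cdot\beta;\,b_i^{(1)},b_i^{(2)})$$ and the problem $$\text{(G)}\qquad \max_{\beta,v,y}\ \frac1n\sum_{i=1}^n y_i\quad\text{s.t. } v_i=w^i\cdot\beta\ (i=1,\dots,n),\ \ (v_i,y_i)\in\operatorname{cl}\big(\mathrm{gr}(r(\cdot;b_i^{(1)},b_i^{(2)});[l_i,u_i])\big)\ (i=1,\dots,n),\ \ \beta\in X.$$ If $(\beta,v,y)$ is an optimal solution of (G), then $\beta$ is an optimal solution of (P). Conversely, if $\beta$ is an optimal solution of (P), then there exist $v\in\mathbb{R}^n$, $y\in\mathbb{R}^n$ such that $(\beta,v,y)$ is an optimal solution of (G).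
   Context: For bids $b^{(1)}\ge b^{(2)}\ge 0$ the reward function is $r(v;b^{(1)},b^{(2)})=b^{(2)}$ if $v\le b^{(2)}$, $=v$ if $b^{(2)}<v\le b^{(1)}$, and $=0$ if $v>b^{(1)}$. Data: $w^i\in\mathbb{R}^d$ and $b_i^{(1)}\ge b_i^{(2)}\ge0$ for $i=1,\dots,n$, and $X=[L,U]^d$. For a set $D\subseteq\mathbb{R}$, $\mathrm{gr}(r(\cdot;b^{(1)},b^{(2)});D)=\{(v,y): v\in D,\ y=r(v;b^{(1)},b^{(2)})\}$, and $\operatorname{cl}$ denotes topological closure in $\mathbb{R}^2$. The bounds are $l_i=\min_{\beta\in X}w^i\cdot\beta$ and $u_i=\max_{\beta\in X}w^i\cdot\beta$. *)

From Stdlib Require Import Reals Lra Lia.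
Open Scope R_scope.

Fixpoint rsum (n : nat) (f : nat -> R) : R :=
  match n with O => 0 | S k => rsum k f + f k end.

(* vectors in R^d are represented by nat -> R, only indices < d matter *)
Definition dot (d : nat) (a b : nat -> R) : R := rsum d (fun j => a j * b j).

Definition reward (v b1 b2 : R) : R :=
  if Rle_dec v b2 then b2 else if Rle_dec v b1 then v else 0.

Definition inX (d : nat) (L U : R) (beta : nat -> R) : Prop :=
  forall j, (j < d)%nat -> L <= beta j <= U.

Definition graph (f : R -> R) (D : R -> Prop) : R * R -> Prop :=
  fun p => D (fst p) /\ snd p = f (fst p).

(* topological closure in R^2 (product topology, generated by open boxes) *)
Definition closure2 (S : R * R -> Prop) (p : R * R) : Prop :=
  forall eps, 0 < eps -> exists q, S q /\
    Rabs (fst q - fst p) < eps /\ Rabs (snd q - snd p) < eps.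

Definition Pobj (n d : nat) (w : nat -> nat -> R) (b1 b2 : nat -> R)
  (beta : nat -> R) : R :=
  / INR n * rsum n (fun i => reward (dot d (w i) beta) (b1 i) (b2 i)).

Definition optP (n d : nat) (w : nat -> nat -> R) (b1 b2 : nat -> R) (L U : R)
  (beta : nat -> R) : Prop :=
  inX d L U beta /\
  forall beta', inX d L U beta' -> Pobj n d w b1 b2 beta' <= Pobj n d w b1 b2 beta.

Definition feasG (n d : nat) (w : nat -> nat -> R) (b1 b2 : nat -> R) (L U : R)
  (l u : nat -> R) (beta v y : nat -> R) : Prop :=
  inX d L U beta /\
  forall i, (i < n)%nat ->
    v i = dot d (w i) beta /\
    closure2 (graph (fun t => reward t (b1 i) (b2 i)) (fun t => l i <= t <= u i))
             (v i, y i).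

Definition Gobj (n : nat) (y : nat -> R) : R := / INR n * rsum n y.

Definition optG (n d : nat) (w : nat -> nat -> R) (b1 b2 : nat -> R) (L U : R)
  (l u : nat -> R) (beta v y : nat -> R) : Prop :=
  feasG n d w b1 b2 L U l u beta v y /\
  forall beta' v' y', feasG n d w b1 b2 L U l u beta' v' y' -> Gobj n y' <= Gobj n y.

(* The reward r(.; b1, b2) is upper semicontinuous: it coincides with
   max(v, b2) up to b1, where it is continuous, and drops to 0 <= b1 beyond.
   Hence every point (v, y) of the closure of its graph satisfies
   y <= r(v), so the objective of (G) at a feasible point never exceeds
   R(beta), while lifting any beta in X by v = w.beta and y = r(v) is
   feasible for (G) and attains R(beta). *)
From Stdlib Require Import Reals Lra Lia.
Open Scope R_scope.

Lemma rsum_le (n : nat) (f g : nat -> R) :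
  (forall k, (k < n)%nat -> f k <= g k) -> rsum n f <= rsum n g.
Proof.
  induction n as [|n IH]; intros Hfg; simpl; [lra|].
  assert (rsum n f <= rsum n g) by (apply IH; intros; apply Hfg; lia).
  assert (f n <= g n) by (apply Hfg; lia).
  lra.
Qed.

Lemma mean_le (n : nat) (f g : nat -> R) :
  (forall k, (k < n)%nat -> f k <= g k) -> / INR n * rsum n f <= / INR n * rsum n g.
Proof.
  intros Hfg. destruct n as [|m]; [simpl; lra|].
  apply Rmult_le_compat_l.
  - apply Rlt_le, Rinv_0_lt_compat, lt_0_INR; lia.
  - exact (rsum_le _ _ _ Hfg).
Qed.

Definition upper_semicontinuous (f : R -> R) : Prop :=
  forall v eps, 0 < eps -> exists delta, 0 < delta /\
    forall t, Rabs (t - v) < delta -> f t < f v + eps.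

Lemma closure2_graph_le (f : R -> R) (D : R -> Prop) (v y : R) :
  upper_semicontinuous f -> closure2 (graph f D) (v, y) -> y <= f v.
Proof.
  intros Husc Hcl. apply Rnot_lt_le. intros Hlt.
  set (eps := (y - f v) / 2).
  destruct (Husc v eps) as [delta [Hdelta Hnear]]; [unfold eps; lra|].
  destruct (Hcl (Rmin eps delta)) as [[t z] [[_ Hz] [Ht Hzy]]].
  { apply Rmin_glb_lt; unfold eps; lra. }
  simpl in Hz, Ht, Hzy. subst z.
  assert (Hft : f t < f v + eps).
  { apply Hnear. apply Rlt_le_trans with (1 := Ht). apply Rmin_r. }
  apply Rabs_def2 in Hzy. pose proof (Rmin_l eps delta).
  unfold eps in *. lra.
Qed.

Lemma closure2_graph_self (f : R -> R) (D : R -> Prop) (v : R) :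
  D v -> closure2 (graph f D) (v, f v).
Proof.
  intros Hv eps Heps. exists (v, f v). simpl.
  rewrite !Rminus_diag, Rabs_R0. split; [split; [exact Hv | reflexivity] | split; lra].
Qed.

Lemma reward_le_Rmax (v b1 b2 : R) : 0 <= b1 -> reward v b1 b2 <= Rmax v b2.
Proof.
  intros Hb1. unfold reward, Rmax.
  destruct (Rle_dec v b2); [|destruct (Rle_dec v b1)]; lra.
Qed.

Lemma reward_Rmax (v b1 b2 : R) : v <= b1 -> reward v b1 b2 = Rmax v b2.
Proof.
  intros Hv. unfold reward, Rmax.
  destruct (Rle_dec v b2); [|destruct (Rle_dec v b1)]; lra.
Qed.

Lemma reward_gt (v b1 b2 : R) : b2 <= b1 -> b1 < v -> reward v b1 b2 = 0.
Proof.
  intros Hb Hv. unfold reward.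
  destruct (Rle_dec v b2); [|destruct (Rle_dec v b1)]; lra.
Qed.

Lemma Rmax_l_lipschitz (t v b : R) : Rmax t b <= Rmax v b + Rabs (t - v).
Proof.
  pose proof (Rabs_pos (t - v)). pose proof (Rle_abs (t - v)).
  unfold Rmax. destruct (Rle_dec t b); destruct (Rle_dec v b); lra.
Qed.

Lemma reward_usc (b1 b2 : R) :
  b2 <= b1 -> 0 <= b1 -> upper_semicontinuous (fun t => reward t b1 b2).
Proof.
  intros Hb Hb1 v eps Heps.
  destruct (Rle_dec v b1) as [Hv|Hv].
  - exists eps. split; [exact Heps|]. intros t Ht.
    rewrite (reward_Rmax v b1 b2 Hv).
    pose proof (reward_le_Rmax t b1 b2 Hb1). pose proof (Rmax_l_lipschitz t v b2).
    lra.
  - exists (v - b1). split; [lra|]. intros t Ht. apply Rabs_def2 in Ht.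
    rewrite (reward_gt v b1 b2 Hb), (reward_gt t b1 b2 Hb); lra.
Qed.

Section Reformulation.

Context {n d : nat} {w : nat -> nat -> R} {b1 b2 : nat -> R} {L U : R}
  {l u : nat -> R}.

Hypothesis hb : forall i, (i < n)%nat -> b1 i >= b2 i /\ b2 i >= 0.
Hypothesis hl : forall i, (i < n)%nat ->
  forall beta, inX d L U beta -> l i <= dot d (w i) beta.
Hypothesis hu : forall i, (i < n)%nat ->
  forall beta, inX d L U beta -> dot d (w i) beta <= u i.

Lemma feasG_lift {beta : nat -> R} : inX d L U beta ->
  feasG n d w b1 b2 L U l u beta (fun i => dot d (w i) beta)
    (fun i => reward (dot d (w i) beta) (b1 i) (b2 i)).
Proof.
  intros Hbeta. split; [exact Hbeta|]. intros i Hi. split; [reflexivity|].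
  exact (closure2_graph_self (fun t => reward t (b1 i) (b2 i)) _ _
    (conj (hl i Hi beta Hbeta) (hu i Hi beta Hbeta))).
Qed.

Lemma Gobj_le_Pobj {beta v y : nat -> R} :
  feasG n d w b1 b2 L U l u beta v y -> Gobj n y <= Pobj n d w b1 b2 beta.
Proof.
  intros [_ Hfeas]. apply mean_le. intros i Hi.
  destruct (Hfeas i Hi) as [Hv Hcl]. destruct (hb i Hi) as [Hb Hb2].
  assert (Husc : upper_semicontinuous (fun t => reward t (b1 i) (b2 i)))
    by (apply reward_usc; lra).
  rewrite <- Hv. exact (closure2_graph_le _ _ _ _ Husc Hcl).
Qed.

End Reformulation.

Theorem proposition1 (n d : nat) (w : nat -> nat -> R) (b1 b2 : nat -> R)
  (L U : R) (l u : nat -> R)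
  (hb : forall i, (i < n)%nat -> b1 i >= b2 i /\ b2 i >= 0)
  (hl : forall i, (i < n)%nat ->
          (exists beta, inX d L U beta /\ dot d (w i) beta = l i) /\
          (forall beta, inX d L U beta -> l i <= dot d (w i) beta))
  (hu : forall i, (i < n)%nat ->
          (exists beta, inX d L U beta /\ dot d (w i) beta = u i) /\
          (forall beta, inX d L U beta -> dot d (w i) beta <= u i)) :
  (forall beta v y, optG n d w b1 b2 L U l u beta v y -> optP n d w b1 b2 L U beta) /\
  (forall beta, optP n d w b1 b2 L U beta ->
     exists v y, optG n d w b1 b2 L U l u beta v y).
Proof.
  (* Only that [l] and [u] bound w.beta over X matters, not that they are attained. *)
  pose proof (fun i Hi => proj2 (hl i Hi)) as hl'.
  pose proof (fun i Hi => proj2 (hu i Hi)) as hu'.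
  split.
  - intros beta v y [Hfeas Hopt]. split; [exact (proj1 Hfeas)|].
    intros beta' Hbeta'.
    eapply Rle_trans; [exact (Hopt _ _ _ (feasG_lift hl' hu' Hbeta'))|].
    exact (Gobj_le_Pobj hb Hfeas).
  - intros beta [Hbeta Hopt]. do 2 eexists.
    split; [exact (feasG_lift hl' hu' Hbeta)|].
    intros beta' v' y' Hfeas'.
    eapply Rle_trans; [exact (Gobj_le_Pobj hb Hfeas')|].
    exact (Hopt _ (proj1 Hfeas')).
Qed.
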